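(* Fix $J\in\mathbb Z_{>0}$ and $i_1,j_1,i_2,j_2\in\mathbb Z_{\ge0}$, and let $\mathcal K,\mathcal K'\in\{0,1\}^J$ with $|\mathcal K|=|\mathcal K'|=j_2$. Then $W_J(i_1,j_1;i_2,\mathcal K\mid v,\lambda)=W_J(i_1,j_1;i_2,\mathcal K'\mid v,\lambda)$ for all $v,\lambda,\Lambda$.
   Context: Fix $\eta,\tau\in\mathbb C$, $\operatorname{Im}\tau>0$. $f(z)$ denotes either the theta function $\theta(z)=-\sum_{j\in\mathbb Z}\exp\big(\pi\mathbf i\tau(j+\tfrac12)^2+2\pi\mathbf i(j+\tfrac12)(z+\tfrac12)\big)$ or $\sin(\pi z)$ (either choice). For $v,\lambda,\Lambda\in\mathbb C$ and $k\in\mathbb Z_{\ge0}$ define the unfused weights $W_1(k,0;k,0\mid v,\lambda,\Lambda)=\frac{f(\eta(\Lambda-2k)-v)f(\lambda+2k\eta)}{f(\eta\Lambda-v)f(\lambda)}$, $W_1(k,1;k+1,0\mid\cdot)=\frac{f(v+\lambda+\eta(2k+2-\Lambda))f(2\eta)}{f(\eta\Lambda-v)f(\lambda)}$, $W_1(k,0;k-1,1\mid\cdot)=\frac{f(\lambda-v+\eta(2k-2-\Lambda))f(2\eta(\Lambda+1-k))f(2k\eta)}{f(\eta\Lambda-v)f(\lambda)f(2\eta)}$ ($k\ge1$), $W_1(k,1;k,1\mid\cdot)=\frac{f(\eta(2k-\Lambda)-v)f(\lambda+2\eta(k-\Lambda))}{f(\eta\Lambda-v)f(\lambda)}$, and $W_1(i_1,j_1;i_2,j_2\mid\cdot)=0$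 for all other quadruples. Column weights: for $J\ge1$, $i_1,i_2\ge0$, $\mathcal J_1=(j_{1,1},\dots,j_{1,J})$, $\mathcal J_2=(j_{2,1},\dots,j_{2,J})\in\{0,1\}^J$, put $i^{(1)}=i_1$, $i^{(k+1)}=i^{(k)}+j_{1,k}-j_{2,k}$; dynamical parameters $\Phi_J=\lambda$ and, for $1\le k<J$, $\Phi_k=\Phi_{k+1}-2\eta$ if $j_{1,k+1}=0$ and $\Phi_k=\Phi_{k+1}+2\eta$ if $j_{1,k+1}=1$. Then $W_J(i_1,\mathcal J_1;i_2,\mathcal J_2\mid v,\lambda)=\prod_{k=1}^JW_1(i^{(k)},j_{1,k};i^{(k+1)},j_{2,k}\mid v+2\eta(k-1),\Phi_k,\Lambda)$ if all $i^{(k)}\ge0$ and $i^{(J+1)}=i_2$, and $0$ otherwise (the dependence on $\Lambda$ is suppressed). For $\mathcal K\in\{0,1\}^J$, $W_J(i_1,j_1;i_2,\mathcal K\mid v,\lambda)=\sum_{\mathcal J_1\in\{0,1\}^J,\,|\mathcal J_1|=j_1}W_J(i_1,\mathcal J_1;i_2,\mathcal K\mid v,\lambda)$, where $|\cdot|$ is the number of ones. *)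

From Stdlib Require Import Reals ZArith List Bool ClassicalEpsilon.
Import ListNotations.
Open Scope R_scope.

Record CC : Type := mkC { re : R; im : R }.

Definition CR (x : R) : CC := mkC x 0.
Definition C0 : CC := CR 0.
Definition C1 : CC := CR 1.
Definition Ci : CC := mkC 0 1.
Definition Cadd (z w : CC) : CC := mkC (re z + re w) (im z + im w).
Definition Copp (z : CC) : CC := mkC (- re z) (- im z).
Definition Csub (z w : CC) : CC := Cadd z (Copp w).
Definition Cmul (z w : CC) : CC :=
  mkC (re z * re w - im z * im w) (re z * im w + im z * re w).
Definition Cinv (z : CC) : CC :=
  let d := re z * re z + im z * im z in mkC (re z / d) (- im z / d).
Definition Cdiv (z w : CC) : CC := Cmul z (Cinv w).
Definition CZ (n : Z) : CC := CR (IZR n).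
Definition Cnat (n : nat) : CC := CR (INR n).

Definition Cexp (z : CC) : CC := mkC (exp (re z) * cos (im z)) (exp (re z) * sin (im z)).
Definition Csin (z : CC) : CC :=
  mkC (sin (re z) * cosh (im z)) (cos (re z) * sinh (im z)).

(** * The theta function
   theta z = - sum_{j in Z} exp(pi i tau (j+1/2)^2 + 2 pi i (j+1/2)(z+1/2)),
   defined as the limit of the symmetric partial sums (which converge
   absolutely when Im tau > 0). *)
Definition theta_term (tau z : CC) (j : Z) : CC :=
  let h := CR (IZR j + / 2) in
  let piC := CR PI in
  Cexp (Cadd (Cmul (Cmul (Cmul piC Ci) tau) (Cmul h h))
             (Cmul (Cmul (Cmul (CR 2) piC) Ci) (Cmul h (Cadd z (CR (/ 2)))))).

(* sum_{j = -N}^{N} theta_term tau z j *)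
Fixpoint theta_aux (tau z : CC) (N : nat) (n : nat) : CC :=
  match n with
  | O => C0
  | S n' => Cadd (theta_aux tau z N n') (theta_term tau z (Z.of_nat n' - Z.of_nat N)%Z)
  end.
Definition theta_partial (tau z : CC) (N : nat) : CC :=
  theta_aux tau z N (2 * N + 1).

Definition theta (tau z : CC) : CC :=
  Copp (epsilon (inhabits C0)
          (fun L => Un_cv (fun N => re (theta_partial tau z N)) (re L) /\
                    Un_cv (fun N => im (theta_partial tau z N)) (im L))).

Inductive fchoice : Type := ThetaF | SinF.
Definition ff (fc : fchoice) (tau z : CC) : CC :=
  match fc with
  | ThetaF => theta tau z
  | SinF => Csin (Cmul (CR PI) z)
  end.

Section Weights.
Variables (fc : fchoice) (tau eta : CC).
Let f := ff fc tau.
Let two_eta := Cmul (CR 2) eta.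

Definition W1 (k : nat) (a : bool) (k' : nat) (b : bool) (v lam Lam : CC) : CC :=
  let den := Cmul (f (Csub (Cmul eta Lam) v)) (f lam) in
  match a, b with
  | false, false =>
      if Nat.eqb k' k then
        Cdiv (Cmul (f (Csub (Cmul eta (Csub Lam (Cmul (CR 2) (Cnat k)))) v))
                   (f (Cadd lam (Cmul (Cmul (CR 2) (Cnat k)) eta)))) den
      else C0
  | true, false =>
      if Nat.eqb k' (S k) then
        Cdiv (Cmul (f (Cadd (Cadd v lam)
                            (Cmul eta (Csub (Cadd (Cmul (CR 2) (Cnat k)) (CR 2)) Lam))))
                   (f two_eta)) den
      else C0
  | false, true =>
      if andb (1 <=? k)%nat (Nat.eqb (S k') k) then
        Cdiv (Cmul (Cmul (f (Cadd (Csub lam v)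
                                  (Cmul eta (Csub (Csub (Cmul (CR 2) (Cnat k)) (CR 2)) Lam))))
                         (f (Cmul two_eta (Csub (Cadd Lam C1) (Cnat k)))))
                   (f (Cmul two_eta (Cnat k))))
             (Cmul den (f two_eta))
      else C0
  | true, true =>
      if Nat.eqb k' k then
        Cdiv (Cmul (f (Csub (Cmul eta (Csub (Cmul (CR 2) (Cnat k)) Lam)) v))
                   (f (Cadd lam (Cmul two_eta (Csub (Cnat k) Lam))))) den
      else C0
  end.

(** Dynamical parameters: for J1 = [j_{1,1}; ...; j_{1,J}], returns
    [Phi_1; ...; Phi_J] with Phi_J = lam and
    Phi_k = Phi_{k+1} - 2 eta if j_{1,k+1} = 0, Phi_{k+1} + 2 eta if j_{1,k+1} = 1. *)
Fixpoint phis (lam : CC) (l : list bool) : list CC :=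
  match l with
  | [] => []
  | _ :: rest =>
      let ps := phis lam rest in
      match rest, ps with
      | b :: _, p :: _ => (if b then Cadd p two_eta else Csub p two_eta) :: ps
      | _, _ => [lam]
      end
  end.

Definition bZ (b : bool) : Z := if b then 1%Z else 0%Z.

(** product over k of W1(i^(k), j_{1,k}; i^(k+1), j_{2,k} | v + 2 eta (k-1), Phi_k, Lam),
    with i the current height i^(k); returns 0 if some height is negative or
    the final height differs from i2. *)
Fixpoint colW_aux (Lam : CC) (i2 : nat) (i : Z) (l1 l2 : list bool) (ps : list CC) (v : CC) : CC :=
  match l1, l2, ps with
  | [], [], [] => if Z.eqb i (Z.of_nat i2) then C1 else C0
  | a :: l1', b :: l2', p :: ps' =>
      let i' := (i + bZ a - bZ b)%Z in
      if Z.ltb i 0 then C0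
      else Cmul (W1 (Z.to_nat i) a (Z.to_nat i') b v p Lam)
                (colW_aux Lam i2 i' l1' l2' ps' (Cadd v two_eta))
  | _, _, _ => C0
  end.

Definition WJ (i1 : nat) (J1 : list bool) (i2 : nat) (J2 : list bool) (v lam Lam : CC) : CC :=
  if Nat.eqb (length J1) (length J2)
  then colW_aux Lam i2 (Z.of_nat i1) J1 J2 (phis lam J1) v
  else C0.

End Weights.

Definition ones (l : list bool) : nat := length (filter (fun b => b) l).

Fixpoint blists (n : nat) : list (list bool) :=
  match n with
  | O => [[]]
  | S n' => map (cons false) (blists n') ++ map (cons true) (blists n')
  end.

Definition Csum (l : list CC) : CC := fold_right Cadd C0 l.

Definition WJsum (fc : fchoice) (tau eta : CC) (i1 j1 i2 : nat) (K : list bool)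
    (v lam Lam : CC) : CC :=
  Csum (map (fun J1 => WJ fc tau eta i1 J1 i2 K v lam Lam)
            (filter (fun J1 => Nat.eqb (ones J1) j1) (blists (length K)))).

(* Summing over the upper labels, W_J(i1, j1; i2, K) is computed column by column ([colsum]).
   Exchanging two adjacent lower labels 0, 1 does not change it, by three local relations between
   products of two unfused weights, one for each number (0, 1 or 2) of ones among the two
   corresponding upper labels.  Two of them are rational identities in the values of f; the
   third is a combination of two instances of the three-term relation
     f(x+y) f(x-y) f(u+w) f(u-w) = f(x+w) f(x-w) f(u+y) f(u-y) + f(x+u) f(x-u) f(y+w) f(y-w).
   For sin(pi z) this follows from sin(a+b) sin(a-b) = sin(a)^2 - sin(b)^2.  For theta, the
   product theta(x+y) theta(x-y) equals E(x) O(y) - O(x) E(y), where E(z) and O(z) are the theta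
   functions of modulus 2 tau with characteristics 0 and 1/2 at 2z, so the relation becomes a
   Pluecker identity.  Sorting the lower labels by such exchanges proves the claim. *)

From Stdlib Require Import Reals ZArith List Lra Lia Field Permutation ClassicalEpsilon.
Import ListNotations.
Open Scope R_scope.

Lemma CC_ext (z w : CC) : re z = re w -> im z = im w -> z = w.
Proof. destruct z, w; simpl; intros -> ->; reflexivity. Qed.

Lemma CC_eq_dec (z w : CC) : {z = w} + {z <> w}.
Proof.
  destruct (Req_EM_T (re z) (re w)) as [Hr|Hr]; [destruct (Req_EM_T (im z) (im w)) as [Hi|Hi]|].
  - left. apply CC_ext; assumption.
  - right. intros ->. apply Hi. reflexivity.
  - right. intros ->. apply Hr. reflexivity.
Qed.

Ltac Ceq := apply CC_ext; cbn [re im Cadd Cmul Csub Copp CR C0 C1 Cnat CZ Cdiv Cinv Ci];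
  rewrite ?S_INR; field.

Lemma Cinv_l (z : CC) : z <> C0 -> Cmul (Cinv z) z = C1.
Proof.
  destruct z as [a b]; intro Hz.
  assert (Hd : a * a + b * b <> 0).
  { intro H. apply Hz. apply CC_ext; simpl; nra. }
  apply CC_ext; simpl; field; exact Hd.
Qed.

Lemma CC_field : field_theory C0 C1 Cadd Cmul Csub Copp Cdiv Cinv (@eq CC).
Proof.
  constructor.
  - constructor; intros; Ceq.
  - intro H. apply (f_equal re) in H. simpl in H. lra.
  - reflexivity.
  - exact Cinv_l.
Qed.

Add Field CCfield : CC_field.

Lemma Cmul_neq0 (a b : CC) : a <> C0 -> b <> C0 -> Cmul a b <> C0.
Proof.
  intros Ha Hb H. apply Hb.
  transitivity (Cmul (Cinv a) (Cmul a b)); [field; exact Ha | rewrite H; ring].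
Qed.

Lemma eq_of_lin_comb2 (X Y a1 b1 a2 b2 c1 c2 : CC) :
  Csub X Y = Cadd (Cmul c1 (Csub a1 b1)) (Cmul c2 (Csub a2 b2)) -> a1 = b1 -> a2 = b2 -> X = Y.
Proof.
  intros H <- <-. transitivity (Cadd Y (Csub X Y)); [ring|]. rewrite H. ring.
Qed.

Lemma eq_of_sub_sum3 (X Y p1 q1 p2 q2 p3 q3 : CC) :
  Csub X Y = Cadd (Cadd (Csub p1 q1) (Csub p2 q2)) (Csub p3 q3) ->
  p1 = q1 -> p2 = q2 -> p3 = q3 -> X = Y.
Proof.
  intros H <- <- <-. transitivity (Cadd Y (Csub X Y)); [ring|]. rewrite H. ring.
Qed.

Lemma Csum_app (l1 l2 : list CC) : Csum (l1 ++ l2) = Cadd (Csum l1) (Csum l2).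
Proof. induction l1 as [|a l1 IH]; simpl; [|rewrite IH]; ring. Qed.

Lemma Csum_map_scal {A} (c : CC) (g : A -> CC) (l : list A) :
  Csum (map (fun x => Cmul c (g x)) l) = Cmul c (Csum (map g l)).
Proof. induction l as [|a l IH]; simpl; [|rewrite IH]; ring. Qed.

Lemma Csum_map_C0 {A} (l : list A) : Csum (map (fun _ => C0) l) = C0.
Proof. induction l as [|a l IH]; simpl; [|rewrite IH]; ring. Qed.

(** * The three-term relation *)

Definition weierstrass (f : CC -> CC) : Prop := forall x y u w,
  Cmul (Cmul (f (Cadd x y)) (f (Csub x y))) (Cmul (f (Cadd u w)) (f (Csub u w))) =
  Cadd (Cmul (Cmul (f (Cadd x w)) (f (Csub x w))) (Cmul (f (Cadd u y)) (f (Csub u y))))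
       (Cmul (Cmul (f (Cadd x u)) (f (Csub x u))) (Cmul (f (Cadd y w)) (f (Csub y w)))).

Lemma weierstrass_f0 (f : CC -> CC) (x : CC) :
  weierstrass f -> f (Cadd x x) <> C0 -> f C0 = C0.
Proof.
  intros Hf Hx. specialize (Hf x x x x).
  replace (Csub x x) with C0 in Hf by Ceq.
  set (p := Cmul (f (Cadd x x)) (f C0)) in Hf.
  assert (Hp : p = C0).
  { assert (Hsq : Cmul p p = C0).
    { transitivity (Csub (Cadd (Cmul p p) (Cmul p p)) (Cmul p p)); [ring|].
      rewrite <- Hf at 1. ring. }
    destruct (CC_eq_dec p C0) as [|Hn]; auto. exfalso. exact (Cmul_neq0 _ _ Hn Hn Hsq). }
  destruct (CC_eq_dec (f C0) C0) as [|Hn]; auto. exfalso. exact (Cmul_neq0 _ _ Hx Hn Hp).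
Qed.

Definition Cnorm1 (z : CC) : R := Rabs (re z) + Rabs (im z).

Lemma Cnorm1_ge0 z : 0 <= Cnorm1 z.
Proof. unfold Cnorm1. pose proof (Rabs_pos (re z)); pose proof (Rabs_pos (im z)); lra. Qed.

Lemma Cnorm1_C0 : Cnorm1 C0 = 0.
Proof. unfold Cnorm1; simpl. rewrite Rabs_R0. ring. Qed.

Lemma Cnorm1_add a b : Cnorm1 (Cadd a b) <= Cnorm1 a + Cnorm1 b.
Proof.
  unfold Cnorm1; simpl. pose proof (Rabs_triang (re a) (re b)); pose proof (Rabs_triang (im a) (im b)); lra.
Qed.

Lemma Cnorm1_opp a : Cnorm1 (Copp a) = Cnorm1 a.
Proof. unfold Cnorm1; simpl. rewrite !Rabs_Ropp. reflexivity. Qed.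

Lemma Cnorm1_mul a b : Cnorm1 (Cmul a b) <= Cnorm1 a * Cnorm1 b.
Proof.
  unfold Cnorm1; simpl.
  pose proof (Rabs_triang (re a * re b) (- (im a * im b))) as H1.
  pose proof (Rabs_triang (re a * im b) (im a * re b)) as H2.
  rewrite Rabs_Ropp in H1. rewrite !Rabs_mult in H1, H2. unfold Rminus.
  pose proof (Rabs_pos (re a)); pose proof (Rabs_pos (im a));
  pose proof (Rabs_pos (re b)); pose proof (Rabs_pos (im b)). nra.
Qed.

Lemma Rabs_re_le z : Rabs (re z) <= Cnorm1 z.
Proof. unfold Cnorm1. pose proof (Rabs_pos (im z)). lra. Qed.
Lemma Rabs_im_le z : Rabs (im z) <= Cnorm1 z.
Proof. unfold Cnorm1. pose proof (Rabs_pos (re z)). lra. Qed.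

Definition Ccv (u : nat -> CC) (l : CC) : Prop :=
  Un_cv (fun n => re (u n)) (re l) /\ Un_cv (fun n => im (u n)) (im l).

Lemma Ccv_add u v a b : Ccv u a -> Ccv v b -> Ccv (fun n => Cadd (u n) (v n)) (Cadd a b).
Proof. intros [H1 H2] [H3 H4]; split; simpl; apply CV_plus; auto. Qed.

Lemma Ccv_mul u v a b : Ccv u a -> Ccv v b -> Ccv (fun n => Cmul (u n) (v n)) (Cmul a b).
Proof.
  intros [H1 H2] [H3 H4]; split; simpl.
  - apply CV_minus; apply CV_mult; auto.
  - apply CV_plus; apply CV_mult; auto.
Qed.

Lemma Ccv_unique u a b : Ccv u a -> Ccv u b -> a = b.
Proof. intros [H1 H2] [H3 H4]. apply CC_ext; eapply UL_sequence; eauto. Qed.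

Lemma Ccv_ext u v a : (forall n, u n = v n) -> Ccv u a -> Ccv v a.
Proof.
  intros E [H1 H2]; split; intros eps Heps;
    [destruct (H1 eps Heps) as [N HN] | destruct (H2 eps Heps) as [N HN]];
    exists N; intros n Hn; rewrite <- E; auto.
Qed.

Lemma Un_cv_close (u v : nat -> R) (a : R) (e : nat -> R) :
  Un_cv e 0 -> (forall n, Rabs (u n - v n) <= e n) -> Un_cv v a -> Un_cv u a.
Proof.
  intros He Hb Hv eps Heps.
  destruct (He (eps / 2)) as [N1 HN1]; [lra|]. destruct (Hv (eps / 2)) as [N2 HN2]; [lra|].
  exists (Nat.max N1 N2). intros n Hn.
  specialize (HN1 n ltac:(lia)). specialize (HN2 n ltac:(lia)). specialize (Hb n).
  unfold R_dist in *. rewrite Rminus_0_r in HN1. pose proof (Rle_abs (e n)).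
  replace (u n - a) with ((u n - v n) + (v n - a)) by ring.
  pose proof (Rabs_triang (u n - v n) (v n - a)). lra.
Qed.

Lemma Ccv_close (u v : nat -> CC) (a : CC) (e : nat -> R) :
  Un_cv e 0 -> (forall n, Cnorm1 (Csub (u n) (v n)) <= e n) -> Ccv v a -> Ccv u a.
Proof.
  intros He Hb [H1 H2]; split.
  - apply (Un_cv_close _ (fun n => re (v n)) _ e He); [|exact H1].
    intro n. eapply Rle_trans; [apply (Rabs_re_le (Csub (u n) (v n)))|apply Hb].
  - apply (Un_cv_close _ (fun n => im (v n)) _ e He); [|exact H2].
    intro n. eapply Rle_trans; [apply (Rabs_im_le (Csub (u n) (v n)))|apply Hb].
Qed.

Definition rho : R := exp (-1).

Lemma rho_pos : 0 < rho.
Proof. apply exp_pos. Qed.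

Lemma rho_lt_1 : rho < 1.
Proof. unfold rho. rewrite <- exp_0. apply exp_increasing. lra. Qed.

Lemma rho_pow_ge0 n : 0 <= rho ^ n.
Proof. apply pow_le. left; apply rho_pos. Qed.

Lemma rho_pow_INR n : rho ^ n = exp (- INR n).
Proof.
  induction n as [|n IH]; [simpl; rewrite Ropp_0, exp_0; reflexivity|].
  rewrite S_INR, <- tech_pow_Rmult, IH. unfold rho. rewrite <- exp_plus. f_equal. ring.
Qed.

Lemma Un_cv_geometric (c : R) : Un_cv (fun n => c * rho ^ n) 0.
Proof.
  intros eps He. pose proof rho_pos. pose proof rho_lt_1.
  destruct (pow_lt_1_zero rho ltac:(rewrite Rabs_right; lra) (eps / (Rabs c + 1))) as [N HN].
  { apply Rdiv_lt_0_compat; [lra|]. pose proof (Rabs_pos c). lra. }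
  exists N. intros n Hn. specialize (HN n Hn). unfold R_dist. rewrite Rminus_0_r, Rabs_mult.
  rewrite (Rabs_right (rho ^ n)) in * by (apply Rle_ge, rho_pow_ge0).
  pose proof (Rabs_pos c). pose proof (rho_pow_ge0 n).
  apply Rle_lt_trans with ((Rabs c + 1) * rho ^ n); [nra|].
  apply Rmult_lt_reg_l with (/ (Rabs c + 1)); [apply Rinv_0_lt_compat; lra|].
  rewrite <- Rmult_assoc, Rinv_l, Rmult_1_l by lra. unfold Rdiv in HN. lra.
Qed.

Lemma Cauchy_of_geometric (u : nat -> R) (c : R) :
  (forall N d, Rabs (u (N + d)%nat - u N) <= c * rho ^ N) -> Cauchy_crit u.
Proof.
  intros Hu eps He. destruct (Un_cv_geometric c (eps / 2)) as [N HN]; [lra|].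
  exists N. intros n m Hn Hm. specialize (HN N (le_n N)). unfold R_dist in *.
  rewrite Rminus_0_r in HN. pose proof (Rle_abs (c * rho ^ N)).
  pose proof (Hu N (n - N)%nat) as Hn'. pose proof (Hu N (m - N)%nat) as Hm'.
  replace (N + (n - N))%nat with n in Hn' by lia. replace (N + (m - N))%nat with m in Hm' by lia.
  replace (u n - u m) with ((u n - u N) + - (u m - u N)) by ring.
  pose proof (Rabs_triang (u n - u N) (- (u m - u N))). rewrite Rabs_Ropp in *. lra.
Qed.

Lemma Ccv_of_geometric (u : nat -> CC) (c : R) :
  (forall N d, Cnorm1 (Csub (u (N + d)%nat) (u N)) <= c * rho ^ N) -> exists l, Ccv u l.
Proof.
  intro Hu.
  assert (Hre : Cauchy_crit (fun n => re (u n))).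
  { apply (Cauchy_of_geometric _ c). intros N d.
    eapply Rle_trans; [apply (Rabs_re_le (Csub (u (N + d)%nat) (u N)))|apply Hu]. }
  assert (Him : Cauchy_crit (fun n => im (u n))).
  { apply (Cauchy_of_geometric _ c). intros N d.
    eapply Rle_trans; [apply (Rabs_im_le (Csub (u (N + d)%nat) (u N)))|apply Hu]. }
  destruct (R_complete _ Hre) as [a Ha], (R_complete _ Him) as [b Hb].
  exists (mkC a b). split; assumption.
Qed.

Definition Rsum (l : list R) : R := fold_right Rplus 0 l.

Lemma Rsum_app l1 l2 : Rsum (l1 ++ l2) = Rsum l1 + Rsum l2.
Proof. induction l1 as [|a l1 IH]; simpl; [|rewrite IH]; ring. Qed.

Lemma Rsum_le {A} (u v : A -> R) l :
  (forall x, In x l -> u x <= v x) -> Rsum (map u l) <= Rsum (map v l).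
Proof.
  induction l as [|a l IH]; simpl; intros H; [lra|].
  pose proof (H a (or_introl eq_refl)). pose proof (IH (fun x Hx => H x (or_intror Hx))). lra.
Qed.

Lemma Rsum_ge0 {A} (u : A -> R) l : (forall x, 0 <= u x) -> 0 <= Rsum (map u l).
Proof. induction l as [|a l IH]; simpl; intros H; [lra|]. pose proof (H a). pose proof (IH H). lra. Qed.

Lemma Rsum_plus {A} (u v : A -> R) l :
  Rsum (map (fun x => u x + v x) l) = Rsum (map u l) + Rsum (map v l).
Proof. induction l as [|a l IH]; simpl; [|rewrite IH]; ring. Qed.

Lemma Rsum_scal {A} c (u : A -> R) l : Rsum (map (fun x => c * u x) l) = c * Rsum (map u l).
Proof. induction l as [|a l IH]; simpl; [|rewrite IH]; ring. Qed.

Lemma Rsum_prod {A B} (u : A -> R) (v : B -> R) la lb :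
  Rsum (map (fun p => u (fst p) * v (snd p)) (list_prod la lb)) = Rsum (map u la) * Rsum (map v lb).
Proof.
  induction la as [|a la IH]; simpl; [ring|].
  rewrite map_app, Rsum_app, IH, map_map. simpl. rewrite Rsum_scal. ring.
Qed.

Lemma Cnorm1_Csum {A} (g : A -> CC) l : Cnorm1 (Csum (map g l)) <= Rsum (map (fun x => Cnorm1 (g x)) l).
Proof.
  induction l as [|a l IH]; simpl; [rewrite Cnorm1_C0; lra|].
  eapply Rle_trans; [apply Cnorm1_add | lra].
Qed.

Lemma Csum_map_add {A} (g h : A -> CC) l :
  Csum (map (fun x => Cadd (g x) (h x)) l) = Cadd (Csum (map g l)) (Csum (map h l)).
Proof. induction l as [|a l IH]; simpl; [|rewrite IH]; ring. Qed.

Lemma Csum_map_opp {A} (g : A -> CC) l : Csum (map (fun x => Copp (g x)) l) = Copp (Csum (map g l)).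
Proof. induction l as [|a l IH]; simpl; [|rewrite IH]; ring. Qed.

Lemma Csum_ext {A} (g h : A -> CC) l :
  (forall x, In x l -> g x = h x) -> Csum (map g l) = Csum (map h l).
Proof. intros H. f_equal. apply map_ext_in. exact H. Qed.

Lemma Csum_perm {A} (g : A -> CC) l1 l2 : Permutation l1 l2 -> Csum (map g l1) = Csum (map g l2).
Proof. induction 1; simpl; [reflexivity | rewrite IHPermutation; reflexivity | ring | congruence]. Qed.

Lemma Csum_prod {A B} (u : A -> CC) (v : B -> CC) la lb :
  Csum (map (fun p => Cmul (u (fst p)) (v (snd p))) (list_prod la lb)) =
  Cmul (Csum (map u la)) (Csum (map v lb)).
Proof.
  induction la as [|a la IH]; simpl; [ring|].
  rewrite map_app, Csum_app, IH, map_map. simpl. rewrite Csum_map_scal. ring.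
Qed.

Lemma Csum_filter {A} (P : A -> bool) (g : A -> CC) l :
  Csum (map g (filter P l)) = Csum (map (fun x => if P x then g x else C0) l).
Proof. induction l as [|a l IH]; simpl; [reflexivity|]. destruct (P a); simpl; rewrite IH; ring. Qed.

Lemma NoDup_list_prod {A B} (la : list A) (lb : list B) :
  NoDup la -> NoDup lb -> NoDup (list_prod la lb).
Proof.
  intros Ha Hb. induction Ha as [|a la Hn Ha IH]; simpl; [constructor|].
  apply NoDup_app; auto.
  - apply NoDup_map_NoDup_ForallPairs; [|exact Hb].
    intros x y _ _ E. inversion E. reflexivity.
  - intros p Hp1 Hp2. apply in_map_iff in Hp1 as [y [<- _]].
    apply in_prod_iff in Hp2 as [Ha' _]. contradiction.
Qed.

Section Sublist.
Variables (A : Type) (Adec : forall x y : A, {x = y} + {x <> y}).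

Definition indicator (L : list A) (G : A -> CC) (p : A) : CC :=
  if in_dec Adec p L then G p else C0.

Lemma Csum_sublist (G : A -> CC) (S L : list A) :
  NoDup L -> NoDup S -> incl L S -> Csum (map G L) = Csum (map (indicator L G) S).
Proof.
  intros HL HS Hinc.
  set (P := fun p => if in_dec Adec p L then true else false).
  rewrite (Csum_ext (indicator L G) (fun p => if P p then G p else C0))
    by (intros p _; unfold indicator, P; destruct (in_dec Adec p L); reflexivity).
  rewrite <- Csum_filter.
  apply Csum_perm, NoDup_Permutation; [exact HL | apply NoDup_filter, HS |].
  intro x. rewrite filter_In. unfold P.
  destruct (in_dec Adec x L) as [Hx|Hx]; split; try tauto.
  - intro. split; [apply Hinc|]; auto.
  - intros [_ H]. discriminate.
Qed.

Lemma Csum_sublists_diff (G : A -> CC) (w : A -> R) (inner : A -> bool) (S L1 L2 : list A) :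
  NoDup S -> NoDup L1 -> NoDup L2 -> incl L1 S -> incl L2 S ->
  (forall p, inner p = true -> In p L1 /\ In p L2) -> (forall p, Cnorm1 (G p) <= w p) ->
  Cnorm1 (Csub (Csum (map G L1)) (Csum (map G L2))) <=
  Rsum (map (fun p => if inner p then 0 else w p) S).
Proof.
  intros HS H1 H2 I1 I2 Hin Hw.
  rewrite (Csum_sublist G S L1), (Csum_sublist G S L2) by assumption.
  unfold Csub. rewrite <- Csum_map_opp, <- Csum_map_add.
  eapply Rle_trans; [apply Cnorm1_Csum | apply Rsum_le]. intros p _.
  pose proof (Cnorm1_ge0 (G p)) as Hg. specialize (Hw p). unfold indicator.
  destruct (inner p) eqn:Hp.
  - destruct (Hin p Hp) as [Hp1 Hp2].
    destruct (in_dec Adec p L1); [|contradiction]. destruct (in_dec Adec p L2); [|contradiction].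
    replace (Cadd (G p) (Copp (G p))) with C0 by ring. rewrite Cnorm1_C0. lra.
  - destruct (in_dec Adec p L1), (in_dec Adec p L2).
    + replace (Cadd (G p) (Copp (G p))) with C0 by ring. rewrite Cnorm1_C0. lra.
    + replace (Cadd (G p) (Copp C0)) with (G p) by ring. exact Hw.
    + replace (Cadd C0 (Copp (G p))) with (Copp (G p)) by ring. rewrite Cnorm1_opp. exact Hw.
    + replace (Cadd C0 (Copp C0)) with C0 by ring. rewrite Cnorm1_C0. lra.
Qed.

End Sublist.

Fixpoint zrange (M : nat) : list Z :=
  match M with
  | O => [0%Z]
  | S M' => (- Z.of_nat M)%Z :: zrange M' ++ [Z.of_nat M]
  end.

Lemma In_zrange M j : In j (zrange M) <-> (Z.abs j <= Z.of_nat M)%Z.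
Proof.
  induction M as [|M IH]; cbn [zrange In]; [split; [intros [<-|[]]; reflexivity | intro; left; lia]|].
  rewrite in_app_iff, IH. cbn [In]. split; [intros [E|[H|[E|[]]]]; lia|].
  intro H. destruct (Z.eq_dec j (- Z.of_nat (S M))) as [E|E]; [left; auto|].
  destruct (Z.eq_dec j (Z.of_nat (S M))) as [E'|E']; [right; right; left; auto | right; left; lia].
Qed.

Lemma NoDup_zrange M : NoDup (zrange M).
Proof.
  induction M as [|M IH]; cbn [zrange]; [repeat constructor; intros []|].
  constructor.
  - rewrite in_app_iff, In_zrange. cbn [In]. lia.
  - apply NoDup_app; [exact IH | repeat constructor; intros [] |].
    intros a Ha [E|[]]. subst. apply In_zrange in Ha. lia.
Qed.

Lemma Rsum_zrange_S (u : Z -> R) M :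
  Rsum (map u (zrange (S M))) = u (- Z.of_nat (S M))%Z + Rsum (map u (zrange M)) + u (Z.of_nat (S M)).
Proof.
  cbn [zrange]. rewrite map_cons, map_app.
  change (Rsum (?a :: ?l)) with (a + Rsum l). rewrite Rsum_app. simpl. ring.
Qed.

Lemma geometric_step n : 2 * rho ^ n + 2 * rho ^ S n / (1 - rho) = 2 * rho ^ n / (1 - rho).
Proof. pose proof rho_lt_1. simpl. field. lra. Qed.

Lemma zrange_sum_le K : Rsum (map (fun j => rho ^ Z.abs_nat j) (zrange K)) <= 1 + 2 * rho / (1 - rho).
Proof.
  assert (H : Rsum (map (fun j => rho ^ Z.abs_nat j) (zrange K)) + 2 * rho ^ S K / (1 - rho)
              <= 1 + 2 * rho / (1 - rho)).
  { induction K as [|K IH]; [simpl; lra|].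
    rewrite Rsum_zrange_S. replace (Z.abs_nat (- Z.of_nat (S K))) with (S K) by lia.
    replace (Z.abs_nat (Z.of_nat (S K))) with (S K) by lia.
    pose proof (geometric_step (S K)). lra. }
  pose proof rho_lt_1. pose proof (rho_pow_ge0 (S K)).
  assert (0 <= 2 * rho ^ S K / (1 - rho)) by (apply Rmult_le_pos; [lra | left; apply Rinv_0_lt_compat; lra]).
  lra.
Qed.

Definition tail_weight (M : nat) (j : Z) : R :=
  if (Z.abs j <=? Z.of_nat M)%Z then 0 else rho ^ Z.abs_nat j.

Lemma tail_weight_ge0 M j : 0 <= tail_weight M j.
Proof. unfold tail_weight. destruct (_ <=? _)%Z; [lra | apply rho_pow_ge0]. Qed.

Lemma zrange_tail_le M K : Rsum (map (tail_weight M) (zrange K)) <= 2 * rho ^ S M / (1 - rho).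
Proof.
  assert (H : Rsum (map (tail_weight M) (zrange K)) + 2 * rho ^ S (Nat.max K M) / (1 - rho)
              <= 2 * rho ^ S M / (1 - rho)).
  { induction K as [|K IH]; [unfold tail_weight; simpl; rewrite (proj2 (Z.leb_le _ _)) by lia; lra|].
    rewrite Rsum_zrange_S. unfold tail_weight at 1 3.
    destruct (Nat.le_gt_cases (S K) M) as [HKM|HKM].
    - rewrite !Nat.max_r in * by lia.
      rewrite !(proj2 (Z.leb_le _ _)) by lia. lra.
    - rewrite !(proj2 (Z.leb_gt _ _)) by lia. rewrite Nat.max_l in * by lia.
      replace (Z.abs_nat (- Z.of_nat (S K))) with (S K) by lia.
      replace (Z.abs_nat (Z.of_nat (S K))) with (S K) by lia.
      replace (Nat.max K M) with K in IH by lia.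
      pose proof (geometric_step (S K)). lra. }
  pose proof rho_lt_1. pose proof (rho_pow_ge0 (S (Nat.max K M))).
  assert (0 <= 2 * rho ^ S (Nat.max K M) / (1 - rho))
    by (apply Rmult_le_pos; [lra | left; apply Rinv_0_lt_compat; lra]).
  lra.
Qed.

Definition box (K : nat) : list (Z * Z) := list_prod (zrange K) (zrange K).

Definition in_box (M : nat) (p : Z * Z) : bool :=
  andb (Z.abs (fst p) <=? Z.of_nat M)%Z (Z.abs (snd p) <=? Z.of_nat M)%Z.

Definition Zpair_eq_dec (p q : Z * Z) : {p = q} + {p <> q}.
Proof. decide equality; apply Z.eq_dec. Defined.

Lemma In_box K j k : In (j, k) (box K) <-> (Z.abs j <= Z.of_nat K /\ Z.abs k <= Z.of_nat K)%Z.
Proof. unfold box. rewrite in_prod_iff, !In_zrange. reflexivity. Qed.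

Lemma In_box_in_box K p : In p (box K) <-> in_box K p = true.
Proof.
  destruct p as [j k]. rewrite In_box. unfold in_box. cbn [fst snd].
  rewrite Bool.andb_true_iff, !Z.leb_le. reflexivity.
Qed.

Lemma NoDup_box K : NoDup (box K).
Proof. apply NoDup_list_prod; apply NoDup_zrange. Qed.

Lemma box_tail_le M K :
  Rsum (map (fun p => if in_box M p then 0 else rho ^ Z.abs_nat (fst p) * rho ^ Z.abs_nat (snd p)) (box K))
  <= 2 * (2 * rho ^ S M / (1 - rho)) * (1 + 2 * rho / (1 - rho)).
Proof.
  eapply Rle_trans.
  - apply (Rsum_le _ (fun p => tail_weight M (fst p) * rho ^ Z.abs_nat (snd p) +
                               rho ^ Z.abs_nat (fst p) * tail_weight M (snd p))).
    intros [j k] _. cbn [fst snd]. unfold in_box, tail_weight. cbn [fst snd].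
    pose proof (rho_pow_ge0 (Z.abs_nat j)). pose proof (rho_pow_ge0 (Z.abs_nat k)).
    destruct (Z.abs j <=? Z.of_nat M)%Z, (Z.abs k <=? Z.of_nat M)%Z; cbn [andb]; nra.
  - rewrite Rsum_plus. unfold box.
    rewrite (Rsum_prod (tail_weight M) (fun k => rho ^ Z.abs_nat k)),
      (Rsum_prod (fun j => rho ^ Z.abs_nat j) (tail_weight M)).
    pose proof (zrange_tail_le M K). pose proof (zrange_sum_le K).
    assert (0 <= Rsum (map (tail_weight M) (zrange K))) by (apply Rsum_ge0, tail_weight_ge0).
    assert (0 <= Rsum (map (fun k => rho ^ Z.abs_nat k) (zrange K)))
      by (apply Rsum_ge0; intro; apply rho_pow_ge0).
    nra.
Qed.

(** * [theta] and [sin] satisfy the three-term relation *)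

Lemma Cexp_add a b : Cexp (Cadd a b) = Cmul (Cexp a) (Cexp b).
Proof. apply CC_ext; simpl; rewrite exp_plus, ?cos_plus, ?sin_plus; ring. Qed.

Lemma Cnorm1_Cexp a : Cnorm1 (Cexp a) <= 2 * exp (re a).
Proof.
  unfold Cnorm1, Cexp; simpl. rewrite !Rabs_mult, (Rabs_right (exp (re a))) by (left; apply exp_pos).
  pose proof (exp_pos (re a)).
  assert (Rabs (cos (im a)) <= 1) by (apply Rabs_le, COS_bound).
  assert (Rabs (sin (im a)) <= 1) by (apply Rabs_le, SIN_bound). nra.
Qed.

Lemma sin_IZR_PI k : sin (IZR k * PI) = 0.
Proof. apply sin_eq_0_1. exists k; reflexivity. Qed.

Lemma Cexp_2kPI (k : Z) : Cexp (mkC 0 (2 * (IZR k * PI))) = C1.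
Proof.
  apply CC_ext; simpl; rewrite exp_0.
  - rewrite cos_2a_sin, sin_IZR_PI. ring.
  - rewrite sin_2a, sin_IZR_PI. ring.
Qed.

Lemma Cexp_2kPI_PI (k : Z) : Cexp (mkC 0 (2 * (IZR k * PI) + PI)) = Copp C1.
Proof.
  apply CC_ext; simpl; rewrite exp_0.
  - rewrite cos_plus, cos_2a_sin, sin_2a, sin_IZR_PI, cos_PI, sin_PI. ring.
  - rewrite sin_plus, cos_2a_sin, sin_2a, sin_IZR_PI, cos_PI, sin_PI. ring.
Qed.

Lemma exp_le_compat x y : x <= y -> exp x <= exp y.
Proof. intros [H|<-]; [left; apply exp_increasing, H | right; reflexivity]. Qed.

Lemma gaussian_bound b c x : 0 < b ->
  - PI * b * x ^ 2 + c * x + Rabs x <= (Rabs c + 1) ^ 2 / (4 * PI * b).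
Proof.
  intros Hb. pose proof PI_RGT_0 as HPI.
  assert (H1 : c * x <= Rabs c * Rabs x) by (rewrite <- Rabs_mult; apply Rle_abs).
  assert (H2 : x ^ 2 = Rabs x ^ 2) by (rewrite <- !Rsqr_pow2; apply Rsqr_abs).
  set (a := Rabs x) in *. set (A := Rabs c + 1).
  assert (0 < 4 * PI * b) by nra.
  apply Rle_trans with (- PI * b * a ^ 2 + A * a); [unfold A; rewrite H2; lra|].
  assert (E : A ^ 2 / (4 * PI * b) - (- PI * b * a ^ 2 + A * a) = (2 * PI * b * a - A) ^ 2 / (4 * PI * b))
    by (field; lra).
  assert (0 <= (2 * PI * b * a - A) ^ 2 / (4 * PI * b))
    by (apply Rmult_le_pos; [apply pow2_ge_0 | left; apply Rinv_0_lt_compat; lra]).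
  lra.
Qed.

Section Theta.
Variable tau : CC.
Local Notation t := (theta_term tau).

Lemma theta_aux_shift z N n :
  theta_aux tau z (S N) (S n) = Cadd (t z (- Z.of_nat (S N))%Z) (theta_aux tau z N n).
Proof.
  induction n as [|n IH].
  - cbn [theta_aux]. replace (Z.of_nat 0 - Z.of_nat (S N))%Z with (- Z.of_nat (S N))%Z by lia. Ceq.
  - cbn [theta_aux] in *. rewrite IH.
    replace (Z.of_nat (S n) - Z.of_nat (S N))%Z with (Z.of_nat n - Z.of_nat N)%Z by lia. ring.
Qed.

Lemma theta_partial_zrange z N : theta_partial tau z N = Csum (map (t z) (zrange N)).
Proof.
  unfold theta_partial. induction N as [|N IH]; [simpl; Ceq|].
  replace (2 * S N + 1)%nat with (S (S (2 * N + 1))) by lia.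
  rewrite theta_aux_shift. cbn [theta_aux]. rewrite IH.
  cbn [zrange]. rewrite map_cons, map_app. change (Csum (?a :: ?l)) with (Cadd a (Csum l)).
  rewrite Csum_app. cbn [map Csum fold_right].
  replace (Z.of_nat (2 * N + 1) - Z.of_nat N)%Z with (Z.of_nat (S N)) by lia. ring.
Qed.

Hypothesis Htau : 0 < im tau.

(* Completing the square in [h = j + 1/2] bounds the real part of the exponent of [t z j]
   by [(2 pi |Im z| + 1)^2 / (4 pi Im tau) + 1/2 - |j|]. *)
Definition theta_const (z : CC) : R :=
  2 * exp ((2 * PI * Rabs (im z) + 1) ^ 2 / (4 * PI * im tau) + / 2).

Lemma theta_const_ge0 z : 0 <= theta_const z.
Proof.
  unfold theta_const. pose proof (exp_pos ((2 * PI * Rabs (im z) + 1) ^ 2 / (4 * PI * im tau) + / 2)).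
  lra.
Qed.

Lemma theta_term_bound z j : Cnorm1 (t z j) <= theta_const z * rho ^ Z.abs_nat j.
Proof.
  unfold theta_term. eapply Rle_trans; [apply Cnorm1_Cexp|].
  unfold theta_const. rewrite rho_pow_INR, Rmult_assoc, <- exp_plus.
  replace (INR (Z.abs_nat j)) with (Rabs (IZR j)) by (rewrite INR_IZR_INZ, <- abs_IZR; f_equal; lia).
  apply Rmult_le_compat_l; [lra|]. apply exp_le_compat. simpl re.
  set (h := IZR j + / 2).
  pose proof (gaussian_bound (im tau) (- (2 * PI * im z)) h Htau) as G.
  rewrite Rabs_Ropp, !Rabs_mult, (Rabs_right 2), (Rabs_right PI) in G
    by (pose proof PI_RGT_0; lra).
  assert (Hj : Rabs (IZR j) <= Rabs h + / 2).
  { replace (IZR j) with (h + - / 2) by (unfold h; ring).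
    pose proof (Rabs_triang h (- / 2)). rewrite Rabs_Ropp, (Rabs_right (/ 2)) in H by lra. lra. }
  replace (h * h) with (h ^ 2) by ring. nra.
Qed.

Lemma theta_partial_tail z N d :
  Cnorm1 (Csub (theta_partial tau z (N + d)) (theta_partial tau z N)) <=
  theta_const z * (2 * rho / (1 - rho)) * rho ^ N.
Proof.
  rewrite !theta_partial_zrange.
  eapply Rle_trans.
  - apply (Csum_sublists_diff _ Z.eq_dec (t z) (fun j => theta_const z * rho ^ Z.abs_nat j)
             (fun j => Z.abs j <=? Z.of_nat N)%Z (zrange (N + d))); try apply NoDup_zrange.
    + apply incl_refl.
    + intros j Hj. rewrite In_zrange in *. lia.
    + intros j Hj. apply Z.leb_le in Hj. rewrite !In_zrange. lia.
    + apply theta_term_bound.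
  - rewrite (map_ext _ (fun j => theta_const z * tail_weight N j))
      by (intro j; unfold tail_weight; destruct (_ <=? _)%Z; ring).
    rewrite Rsum_scal. replace (theta_const z * (2 * rho / (1 - rho)) * rho ^ N)
      with (theta_const z * (2 * rho ^ S N / (1 - rho))) by (simpl; field; pose proof rho_lt_1; lra).
    apply Rmult_le_compat_l; [apply theta_const_ge0 | apply zrange_tail_le].
Qed.

Lemma theta_partial_cv z : Ccv (fun N => theta_partial tau z N) (Copp (theta tau z)).
Proof.
  assert (Hex : exists l, Ccv (fun N => theta_partial tau z N) l)
    by (apply (Ccv_of_geometric _ (theta_const z * (2 * rho / (1 - rho)))), theta_partial_tail).
  unfold theta. match goal with |- Ccv _ (Copp (Copp ?e)) => replace (Copp (Copp e)) with e by ring end.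
  exact (epsilon_spec (inhabits C0) _ Hex).
Qed.

(* [qterm m z = exp(pi i tau m^2 / 2 + 2 pi i m z)]: the terms of the theta functions
   of characteristic [m mod 2] with parameter [2 tau] in the variable [2 z]. *)
Definition qterm (m : Z) (z : CC) : CC :=
  Cexp (Cadd (Cmul (Cmul (Cmul (CR PI) Ci) tau) (CR (IZR m * IZR m / 2)))
             (Cmul (Cmul (Cmul (CR 2) (CR PI)) Ci) (Cmul (CR (IZR m)) z))).

Definition theta_prod_term (x y : CC) (p : Z * Z) : CC :=
  Cmul (t (Cadd x y) (fst p)) (t (Csub x y) (snd p)).

Lemma theta_prod_term_even x y a b :
  theta_prod_term x y ((a + b)%Z, (a - b)%Z) = Copp (Cmul (qterm (2 * a + 1) x) (qterm (2 * b) y)).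
Proof.
  unfold theta_prod_term, theta_term, qterm; cbn [fst snd]. rewrite <- !Cexp_add.
  match goal with |- Cexp ?E = Copp (Cexp ?F) =>
    replace E with (Cadd F (mkC 0 (2 * (IZR a * PI) + PI))) end.
  - rewrite Cexp_add, Cexp_2kPI_PI. ring.
  - rewrite ?plus_IZR, ?minus_IZR, ?mult_IZR.
    apply CC_ext; cbn [re im Cadd Cmul Csub Copp CR Ci]; lra.
Qed.

Lemma theta_prod_term_odd x y a b :
  theta_prod_term x y ((a + b)%Z, (a - b - 1)%Z) = Cmul (qterm (2 * a) x) (qterm (2 * b + 1) y).
Proof.
  unfold theta_prod_term, theta_term, qterm; cbn [fst snd]. rewrite <- !Cexp_add.
  match goal with |- Cexp ?E = Cexp ?F =>
    replace E with (Cadd F (mkC 0 (2 * (IZR a * PI)))) end.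
  - rewrite Cexp_add, Cexp_2kPI. ring.
  - rewrite ?plus_IZR, ?minus_IZR, ?mult_IZR.
    apply CC_ext; cbn [re im Cadd Cmul Csub Copp CR Ci]; lra.
Qed.

Definition even_sum (N : nat) (z : CC) : CC := Csum (map (fun n => qterm (2 * n) z) (zrange N)).
Definition odd_sum (N : nat) (z : CC) : CC := Csum (map (fun n => qterm (2 * n + 1) z) (zrange N)).
Definition theta_det (N : nat) (x y : CC) : CC :=
  Csub (Cmul (even_sum N x) (odd_sum N y)) (Cmul (odd_sum N x) (even_sum N y)).

Definition reindex_even (p : Z * Z) : Z * Z := (fst p + snd p, fst p - snd p)%Z.
Definition reindex_odd (p : Z * Z) : Z * Z := (fst p + snd p, fst p - snd p - 1)%Z.
Definition reindexed_box (N : nat) : list (Z * Z) :=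
  map reindex_odd (box N) ++ map reindex_even (box N).

Lemma Csum_reindexed_box N x y :
  Csum (map (theta_prod_term x y) (reindexed_box N)) = theta_det N x y.
Proof.
  unfold reindexed_box, theta_det. rewrite map_app, Csum_app, !map_map.
  rewrite (Csum_ext _ (fun p => Cmul (qterm (2 * fst p) x) (qterm (2 * snd p + 1) y)))
    by (intros [a b] _; apply theta_prod_term_odd).
  rewrite (Csum_ext (fun p => theta_prod_term x y (reindex_even p))
                    (fun p => Copp (Cmul (qterm (2 * fst p + 1) x) (qterm (2 * snd p) y))))
    by (intros [a b] _; apply theta_prod_term_even).
  rewrite Csum_map_opp. unfold box.
  rewrite (Csum_prod (fun a => qterm (2 * a) x) (fun b => qterm (2 * b + 1) y)),
    (Csum_prod (fun a => qterm (2 * a + 1) x) (fun b => qterm (2 * b) y)).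
  unfold even_sum, odd_sum. ring.
Qed.

Lemma Csum_box_theta_prod N x y :
  Csum (map (theta_prod_term x y) (box N)) =
  Cmul (theta_partial tau (Cadd x y) N) (theta_partial tau (Csub x y) N).
Proof.
  unfold theta_prod_term, box. rewrite (Csum_prod (t (Cadd x y)) (t (Csub x y))), !theta_partial_zrange.
  reflexivity.
Qed.

Lemma NoDup_reindexed_box N : NoDup (reindexed_box N).
Proof.
  unfold reindexed_box. apply NoDup_app.
  - apply NoDup_map_NoDup_ForallPairs; [|apply NoDup_box].
    intros [a b] [c d] _ _ E. inversion E. f_equal; lia.
  - apply NoDup_map_NoDup_ForallPairs; [|apply NoDup_box].
    intros [a b] [c d] _ _ E. inversion E. f_equal; lia.
  - intros p H1 H2. apply in_map_iff in H1 as [[a b] [<- _]], H2 as [[c d] [E2 _]].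
    inversion E2. lia.
Qed.

Lemma reindexed_box_incl N : incl (reindexed_box N) (box (2 * N + 1)).
Proof.
  intros [j k] H. apply in_app_or in H. apply In_box.
  destruct H as [H|H]; apply in_map_iff in H as [[a b] [E Hab]]; apply In_box in Hab;
    inversion E; subst; lia.
Qed.

Lemma box_incl_reindexed N : incl (box N) (reindexed_box N).
Proof.
  intros [j k] H. apply In_box in H. apply in_or_app.
  destruct (Z.Even_or_Odd (j + k)) as [[a Ha]|[a Ha]].
  - right. apply in_map_iff. exists (a, (j - a)%Z). split; [unfold reindex_even; cbn; f_equal; lia|].
    apply In_box. lia.
  - left. apply in_map_iff. exists ((a + 1)%Z, (j - a - 1)%Z).
    split; [unfold reindex_odd; cbn; f_equal; lia|]. apply In_box. lia.
Qed.

Lemma theta_det_close N x y :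
  Cnorm1 (Csub (theta_det N x y) (Cmul (theta_partial tau (Cadd x y) N) (theta_partial tau (Csub x y) N)))
  <= theta_const (Cadd x y) * theta_const (Csub x y) *
     (2 * (2 * rho / (1 - rho)) * (1 + 2 * rho / (1 - rho))) * rho ^ N.
Proof.
  set (c := theta_const (Cadd x y) * theta_const (Csub x y)).
  assert (Hc : 0 <= c) by (apply Rmult_le_pos; apply theta_const_ge0).
  rewrite <- Csum_box_theta_prod, <- Csum_reindexed_box.
  eapply Rle_trans.
  - apply (Csum_sublists_diff _ Zpair_eq_dec (theta_prod_term x y)
      (fun p => c * (rho ^ Z.abs_nat (fst p) * rho ^ Z.abs_nat (snd p))) (in_box N) (box (2 * N + 1))).
    + apply NoDup_box.
    + apply NoDup_reindexed_box.
    + apply NoDup_box.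
    + apply reindexed_box_incl.
    + intros [j k] Hp. apply In_box in Hp. apply In_box. lia.
    + intros p Hp. apply In_box_in_box in Hp. split; [apply box_incl_reindexed, Hp | exact Hp].
    + intros [j k]. unfold theta_prod_term, c; cbn [fst snd].
      eapply Rle_trans; [apply Cnorm1_mul|].
      replace (theta_const (Cadd x y) * theta_const (Csub x y) * (rho ^ Z.abs_nat j * rho ^ Z.abs_nat k))
        with ((theta_const (Cadd x y) * rho ^ Z.abs_nat j) * (theta_const (Csub x y) * rho ^ Z.abs_nat k))
        by ring.
      apply Rmult_le_compat; try apply Cnorm1_ge0; apply theta_term_bound.
  - rewrite (map_ext _ (fun p => c * (if in_box N p then 0
                                     else rho ^ Z.abs_nat (fst p) * rho ^ Z.abs_nat (snd p))))
      by (intro p; destruct (in_box N p); ring).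
    rewrite Rsum_scal.
    replace (c * (2 * (2 * rho / (1 - rho)) * (1 + 2 * rho / (1 - rho))) * rho ^ N)
      with (c * (2 * (2 * rho ^ S N / (1 - rho)) * (1 + 2 * rho / (1 - rho))))
      by (simpl; field; pose proof rho_lt_1; lra).
    apply Rmult_le_compat_l; [exact Hc | apply box_tail_le].
Qed.

Lemma theta_det_cv x y :
  Ccv (fun N => theta_det N x y) (Cmul (theta tau (Cadd x y)) (theta tau (Csub x y))).
Proof.
  apply (Ccv_close _ (fun N => Cmul (theta_partial tau (Cadd x y) N) (theta_partial tau (Csub x y) N)) _
           (fun N => theta_const (Cadd x y) * theta_const (Csub x y) *
                     (2 * (2 * rho / (1 - rho)) * (1 + 2 * rho / (1 - rho))) * rho ^ N)).
  - apply Un_cv_geometric.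
  - intro N. apply theta_det_close.
  - replace (Cmul (theta tau (Cadd x y)) (theta tau (Csub x y)))
      with (Cmul (Copp (theta tau (Cadd x y))) (Copp (theta tau (Csub x y)))) by ring.
    apply Ccv_mul; apply theta_partial_cv.
Qed.

Theorem theta_weierstrass : weierstrass (theta tau).
Proof.
  intros x y u w. eapply Ccv_unique.
  - apply Ccv_mul; apply theta_det_cv.
  - eapply Ccv_ext; [|apply Ccv_add; apply Ccv_mul; apply theta_det_cv].
    intro N. unfold theta_det. ring.
Qed.

End Theta.

Lemma Cexp_mul_opp w : Cmul (Cexp w) (Cexp (Copp w)) = C1.
Proof.
  rewrite <- Cexp_add. replace (Cadd w (Copp w)) with C0 by ring.
  apply CC_ext; simpl; rewrite exp_0, ?cos_0, ?sin_0; ring.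
Qed.

Lemma Cexp_neq0 w : Cexp w <> C0.
Proof.
  intro E. pose proof (Cexp_mul_opp w) as H. rewrite E in H.
  apply (f_equal re) in H. simpl in H. lra.
Qed.

Lemma Cexp_opp w : Cexp (Copp w) = Cinv (Cexp w).
Proof.
  pose proof (Cexp_mul_opp w). pose proof (Cexp_neq0 w).
  transitivity (Cmul (Cinv (Cexp w)) (Cmul (Cexp w) (Cexp (Copp w)))); [field; auto|].
  rewrite H. ring.
Qed.

Lemma Csin_exp z : Csin z = Cmul (Csub (Cexp (Cmul Ci z)) (Cexp (Copp (Cmul Ci z)))) (mkC 0 (- / 2)).
Proof.
  unfold Csin, cosh, sinh. apply CC_ext; cbn [re im Cmul Csub Cadd Copp Cexp Ci];
    replace (0 * re z - 1 * im z) with (- im z) by ring;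
    replace (0 * im z + 1 * re z) with (re z) by ring;
    rewrite ?Ropp_involutive, ?cos_neg, ?sin_neg; lra.
Qed.

Lemma Csin_mul_sub a b :
  Cmul (Csin (Cadd a b)) (Csin (Csub a b)) = Csub (Cmul (Csin a) (Csin a)) (Cmul (Csin b) (Csin b)).
Proof.
  rewrite !Csin_exp, !Cexp_opp.
  replace (Cmul Ci (Cadd a b)) with (Cadd (Cmul Ci a) (Cmul Ci b)) by ring.
  replace (Cmul Ci (Csub a b)) with (Cadd (Cmul Ci a) (Copp (Cmul Ci b))) by ring.
  rewrite !Cexp_add, Cexp_opp.
  pose proof (Cexp_neq0 (Cmul Ci a)). pose proof (Cexp_neq0 (Cmul Ci b)).
  field. auto.
Qed.

Theorem sin_weierstrass tau : weierstrass (ff SinF tau).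
Proof.
  assert (Hdiff : forall x y, Cmul (ff SinF tau (Cadd x y)) (ff SinF tau (Csub x y)) =
    Csub (Cmul (ff SinF tau x) (ff SinF tau x)) (Cmul (ff SinF tau y) (ff SinF tau y))).
  { intros x y. cbn [ff]. rewrite <- Csin_mul_sub. f_equal; f_equal; ring. }
  intros x y u w. rewrite !Hdiff. ring.
Qed.

Lemma blists_length (n : nat) (l : list bool) : In l (blists n) -> length l = n.
Proof.
  revert l; induction n as [|n IH]; intros l H; simpl in H.
  - destruct H as [<-|[]]; reflexivity.
  - apply in_app_or in H.
    destruct H as [H|H]; apply in_map_iff in H; destruct H as [l' [<- H]]; simpl; f_equal; auto.
Qed.

Lemma ones_le_length (l : list bool) : (ones l <= length l)%nat.
Proof. induction l as [|[] l IH]; unfold ones in *; simpl; lia. Qed.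

Section Column.
Variables (fc : fchoice) (tau eta lam Lam : CC) (i2 : nat).
Local Notation te := (Cmul (CR 2) eta).

(* [Phi_k = dyn_param c n], where [c] and [n] are the number of ones and the length of [J1]
   after position [k]. *)
Definition dyn_param (c n : nat) : CC :=
  Cadd lam (Cmul te (CR (2 * INR c - INR n))).

Lemma phis_step (a : bool) (l : list bool) : phis eta lam (a :: l) =
  match l, phis eta lam l with
  | b :: _, p :: _ => (if b then Cadd p te else Csub p te) :: phis eta lam l
  | _, _ => [lam]
  end.
Proof. destruct l; reflexivity. Qed.

Lemma phis_cons (a : bool) (l : list bool) :
  phis eta lam (a :: l) = dyn_param (ones l) (length l) :: phis eta lam l.
Proof.
  revert a; induction l as [|b l IH]; intro a; rewrite phis_step.
  - f_equal. unfold dyn_param, ones; simpl. Ceq.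
  - rewrite IH. f_equal. unfold dyn_param, ones.
    destruct b; simpl filter; simpl length; Ceq.
Qed.

Definition height_step (a b : bool) (n : nat) : option nat :=
  match a, b with
  | false, false | true, true => Some n
  | true, false => Some (S n)
  | false, true => match n with O => None | S m => Some m end
  end.

Fixpoint colsum (n c : nat) (K : list bool) (v : CC) : CC :=
  match K with
  | [] => match c with O => if Nat.eqb n i2 then C1 else C0 | S _ => C0 end
  | b :: K' =>
    let term a c' := match height_step a b n with
      | None => C0
      | Some n' => Cmul (W1 fc tau eta n a n' b v (dyn_param c' (length K')) Lam)
                        (colsum n' c' K' (Cadd v te)) end in
    Cadd (term false c) (match c with O => C0 | S c' => term true c' end)
  end.

Lemma colW_aux_neg (i : Z) l1 l2 ps v :
  (i < 0)%Z -> colW_aux fc tau eta Lam i2 i l1 l2 ps v = C0.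
Proof.
  intro Hi. destruct l1 as [|a l1], l2 as [|b l2], ps as [|p ps]; simpl; try reflexivity.
  - destruct (Z.eqb_spec i (Z.of_nat i2)); [lia | reflexivity].
  - destruct (Z.ltb_spec i 0); [reflexivity | lia].
Qed.

Lemma height_step_Z a b n n' :
  height_step a b n = Some n' -> (Z.of_nat n + bZ a - bZ b)%Z = Z.of_nat n'.
Proof. destruct a, b, n; cbn [height_step bZ]; intro H; inversion H; subst; lia. Qed.

Lemma colW_sum_colsum (K : list bool) : forall n c v,
  Csum (map (fun J1 => colW_aux fc tau eta Lam i2 (Z.of_nat n) J1 K (phis eta lam J1) v)
            (filter (fun J1 => Nat.eqb (ones J1) c) (blists (length K)))) = colsum n c K v.
Proof.
  induction K as [|b K IH]; intros n c v.
  - destruct c; simpl; [|reflexivity].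
    destruct (Z.eqb_spec (Z.of_nat n) (Z.of_nat i2)), (Nat.eqb_spec n i2); try lia; ring.
  - assert (Hterm : forall a c',
      Csum (map (fun J1 => colW_aux fc tau eta Lam i2 (Z.of_nat n) (a :: J1) (b :: K)
                              (phis eta lam (a :: J1)) v)
                (filter (fun J1 => Nat.eqb (ones J1) c') (blists (length K)))) =
      match height_step a b n with
      | None => C0
      | Some n' => Cmul (W1 fc tau eta n a n' b v (dyn_param c' (length K)) Lam)
                        (colsum n' c' K (Cadd v te)) end).
    { intros a c'.
      destruct (height_step a b n) as [n'|] eqn:Hstep.
      - rewrite <- IH, <- Csum_map_scal. f_equal. apply map_ext_in. intros J1 HJ1.
        apply filter_In in HJ1 as [HJ1 Hones]. apply Nat.eqb_eq in Hones.
        apply blists_length in HJ1.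
        rewrite phis_cons, HJ1, Hones. cbn [colW_aux].
        destruct (Z.ltb_spec (Z.of_nat n) 0); [lia|].
        rewrite (height_step_Z _ _ _ _ Hstep), !Nat2Z.id. reflexivity.
      - rewrite <- (Csum_map_C0 (filter (fun J1 => Nat.eqb (ones J1) c') (blists (length K)))).
        f_equal. apply map_ext. intro J1.
        destruct a, b, n; try discriminate.
        rewrite phis_cons. cbn [colW_aux]. rewrite colW_aux_neg by reflexivity.
        destruct (Z.ltb _ _); ring. }
    cbn [length blists colsum]. rewrite filter_app, !filter_map_swap, map_app, Csum_app, !map_map.
    destruct c as [|c'].
    + rewrite <- (Hterm false 0%nat).
      change (fun J1 => Nat.eqb (ones (true :: J1)) 0) with (fun _ : list bool => false).
      rewrite filter_false. reflexivity.
    + rewrite <- (Hterm false (S c')), <- (Hterm true c'). reflexivity.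
Qed.

End Column.

Lemma WJsum_colsum fc tau eta i1 j1 i2 K v lam Lam :
  WJsum fc tau eta i1 j1 i2 K v lam Lam = colsum fc tau eta lam Lam i2 i1 j1 K v.
Proof.
  unfold WJsum. rewrite <- colW_sum_colsum. f_equal. apply map_ext_in.
  intros J1 HJ1. apply filter_In in HJ1 as [HJ1 _]. apply blists_length in HJ1.
  unfold WJ. rewrite HJ1, Nat.eqb_refl. reflexivity.
Qed.

(** * Local exchange relations *)

(* Coordinates are taken in half-units so that the midpoints needed in [exchange_mixed] are
   lattice points. *)
Definition pt (v P L e h : CC) (a b c d g : Z) : CC :=
  Cmul (CR (/ 2)) (Cadd (Cmul (CZ a) v) (Cadd (Cmul (CZ b) P)
    (Cadd (Cmul (CZ c) L) (Cadd (Cmul (CZ d) e) (Cmul (CZ g) (Cmul e h)))))).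
Arguments pt v P L e h (a b c d g)%_Z_scope.

Ltac Ceq_Z := unfold pt, CZ, Cnat; apply CC_ext; cbn [re im Cadd Cmul Csub Copp CR C0 C1];
  rewrite ?S_INR, ?INR_0;
  repeat first [rewrite plus_IZR | rewrite minus_IZR | rewrite mult_IZR | rewrite opp_IZR]; lra.

Lemma pt_add v P L e h a b c d g a' b' c' d' g' :
  Cadd (pt v P L e h a b c d g) (pt v P L e h a' b' c' d' g') =
  pt v P L e h (a + a') (b + b') (c + c') (d + d') (g + g').
Proof. Ceq_Z. Qed.

Lemma pt_sub v P L e h a b c d g a' b' c' d' g' :
  Csub (pt v P L e h a b c d g) (pt v P L e h a' b' c' d' g') =
  pt v P L e h (a - a') (b - b') (c - c') (d - d') (g - g').
Proof. Ceq_Z. Qed.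

Ltac norm_pt :=
  repeat match goal with
  | |- context [pt ?v ?P ?L ?e ?h ?a ?b ?c ?d ?g] =>
      let a' := eval cbv in a in let b' := eval cbv in b in let c' := eval cbv in c in
      let d' := eval cbv in d in let g' := eval cbv in g in
      progress change (pt v P L e h a b c d g) with (pt v P L e h a' b' c' d' g')
  end.

Section Coordinates.
Variables (fc : fchoice) (tau eta Lam v P h : CC).
Local Notation F a b c d g := (ff fc tau (pt v P (Cmul eta Lam) eta h a b c d g)).
Local Notation te := (Cmul (CR 2) eta).

(* [W1] at spectral parameter [v + s te], dynamical parameter [P + t te] and height [h + r]. *)
Definition w_ff (s t r : Z) : CC :=
  Cdiv (Cmul (F (-2) 0 2 (-4 * r - 4 * s) (-4)) (F 0 2 0 (4 * t + 4 * r) 4))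
       (Cmul (F (-2) 0 2 (-4 * s) 0) (F 0 2 0 (4 * t) 0)).
Definition w_tf (s t r : Z) : CC :=
  Cdiv (Cmul (F 2 2 (-2) (4 * s + 4 * t + 4 * r + 4) 4) (F 0 0 0 4 0))
       (Cmul (F (-2) 0 2 (-4 * s) 0) (F 0 2 0 (4 * t) 0)).
Definition w_ft (s t r : Z) : CC :=
  Cdiv (Cmul (Cmul (F (-2) 2 (-2) (4 * t - 4 * s + 4 * r - 4) 4) (F 0 0 4 (4 - 4 * r) (-4)))
             (F 0 0 0 (4 * r) 4))
       (Cmul (Cmul (F (-2) 0 2 (-4 * s) 0) (F 0 2 0 (4 * t) 0)) (F 0 0 0 4 0)).
Definition w_tt (s t r : Z) : CC :=
  Cdiv (Cmul (F (-2) 0 (-2) (4 * r - 4 * s) 4) (F 0 2 (-4) (4 * t + 4 * r) 4))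
       (Cmul (F (-2) 0 2 (-4 * s) 0) (F 0 2 0 (4 * t) 0)).

Section Shifted.
Variables (k : nat) (v' P' : CC) (s t r : Z).
Hypotheses (Hv : v' = Cadd v (Cmul (CZ s) te)) (HP : P' = Cadd P (Cmul (CZ t) te))
  (Hk : Cnat k = Cadd h (CZ r)).

Ltac coords := subst v' P'; unfold W1;
  repeat (rewrite ?Nat.eqb_refl; f_equal); rewrite ?Hk; Ceq_Z.

Lemma W1_ff : W1 fc tau eta k false k false v' P' Lam = w_ff s t r.
Proof. unfold w_ff. coords. Qed.
Lemma W1_tf : W1 fc tau eta k true (S k) false v' P' Lam = w_tf s t r.
Proof. unfold w_tf. coords. Qed.
Lemma W1_tt : W1 fc tau eta k true k true v' P' Lam = w_tt s t r.
Proof. unfold w_tt. coords. Qed.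
End Shifted.

Lemma W1_ft (k : nat) v' P' s t r :
  v' = Cadd v (Cmul (CZ s) te) -> P' = Cadd P (Cmul (CZ t) te) -> Cnat (S k) = Cadd h (CZ r) ->
  W1 fc tau eta (S k) false k true v' P' Lam = w_ft s t r.
Proof.
  intros -> -> Hk. unfold W1, w_ft. cbn [Nat.leb Nat.eqb andb]. rewrite Nat.eqb_refl.
  repeat f_equal; rewrite ?Hk; Ceq_Z.
Qed.

Section Exchange.
Hypotheses (Hf : weierstrass (ff fc tau)) (H2e : F 0 0 0 4 0 <> C0)
  (HLv : F (-2) 0 2 0 0 <> C0) (HLv' : F (-2) 0 2 (-4) 0 <> C0)
  (HPm : F 0 2 0 (-4) 0 <> C0) (HP0 : F 0 2 0 0 0 <> C0) (HPp : F 0 2 0 4 0 <> C0).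

Lemma exchange_empty : Cmul (w_ff 0 (-1) 0) (w_ft 1 0 0) = Cmul (w_ft 0 (-1) 0) (w_ff 1 0 (-1)).
Proof. unfold w_ff, w_ft. norm_pt. field. repeat split; assumption. Qed.

Lemma exchange_full : Cmul (w_tf 0 1 0) (w_tt 1 0 1) = Cmul (w_tt 0 1 0) (w_tf 1 0 0).
Proof. unfold w_tf, w_tt. norm_pt. field. repeat split; assumption. Qed.

(* The difference of the two sides is a combination of two instances of the three-term relation,
   with the common denominators of the weights as coefficients. *)
Lemma exchange_mixed :
  Cadd (Cmul (w_tf 0 (-1) 0) (w_ft 1 0 1)) (Cmul (w_ff 0 1 0) (w_tt 1 0 0)) =
  Cadd (Cmul (w_tt 0 (-1) 0) (w_ff 1 0 0)) (Cmul (w_ft 0 1 0) (w_tf 1 0 (-1))).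
Proof.
  set (p := pt v P (Cmul eta Lam) eta h).
  pose proof (Hf (p 0 2 (-2) (-2) 4) (p (-2) 0 0 (-2) 0) (p 0 0 2 2 0) (p 0 0 2 (-2) (-4)))%Z as H1.
  pose proof (Hf (p (-1) 1 1 2 0) (p (-1) 1 (-3) (-2) 4) (p 1 1 (-1) 2 4) (p (-1) (-1) 1 (-2) 0))%Z as H2.
  unfold p in H1, H2. rewrite !pt_add, !pt_sub in H1, H2. revert H1 H2.
  unfold w_ff, w_tf, w_ft, w_tt. norm_pt. intros H1 H2.
  refine (eq_of_lin_comb2 _ _ _ _ _ _
    (Cinv (Cmul (Cmul (F (-2) 0 2 0 0) (F 0 2 0 (-4) 0)) (Cmul (F (-2) 0 2 (-4) 0) (F 0 2 0 0 0))))
    (Copp (Cinv (Cmul (Cmul (F (-2) 0 2 0 0) (F 0 2 0 4 0)) (Cmul (F (-2) 0 2 (-4) 0) (F 0 2 0 0 0)))))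
    _ H1 H2).
  field. repeat split; assumption.
Qed.

End Exchange.
End Coordinates.

Section LocalExchange.
Variables (fc : fchoice) (tau eta Lam v P Pm Pp : CC).
Local Notation f := (ff fc tau).
Local Notation te := (Cmul (CR 2) eta).
Local Notation W n a n' b v P := (W1 fc tau eta n a n' b v P Lam).
Hypotheses (HPm : Pm = Csub P te) (HPp : Pp = Cadd P te).
Hypotheses (H2e : f te <> C0) (HLv : f (Csub (Cmul eta Lam) v) <> C0)
  (HLv' : f (Csub (Cmul eta Lam) (Cadd v te)) <> C0)
  (HPm0 : f Pm <> C0) (HP0 : f P <> C0) (HPp0 : f Pp <> C0).

Let coords_ff := W1_ff fc tau eta Lam v P.
Let coords_tf := W1_tf fc tau eta Lam v P.
Let coords_ft := W1_ft fc tau eta Lam v P.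
Let coords_tt := W1_tt fc tau eta Lam v P.
Local Open Scope Z_scope.

Ltac shift := rewrite ?HPm, ?HPp; Ceq_Z.
Ltac nondeg := match goal with
  | H : ff _ _ _ <> C0 |- ff _ _ _ <> C0 => let E := fresh in intro E; apply H; rewrite <- E; f_equal; shift
  end.

Lemma W1_exchange_empty (n : nat) :
  Cmul (W (S n) false (S n) false v Pm) (W (S n) false n true (Cadd v te) P) =
  Cmul (W (S n) false n true v Pm) (W n false n false (Cadd v te) P).
Proof.
  rewrite (coords_ff (Cnat (S n)) (S n) v Pm 0 (-1) 0), (coords_ft (Cnat (S n)) n (Cadd v te) P 1 0 0),
    (coords_ft (Cnat (S n)) n v Pm 0 (-1) 0), (coords_ff (Cnat (S n)) n (Cadd v te) P 1 0 (-1)) by shift.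
  apply exchange_empty; nondeg.
Qed.

Lemma W1_exchange_full (n : nat) :
  Cmul (W n true (S n) false v Pp) (W (S n) true (S n) true (Cadd v te) P) =
  Cmul (W n true n true v Pp) (W n true (S n) false (Cadd v te) P).
Proof.
  rewrite (coords_tf (Cnat n) n v Pp 0 1 0), (coords_tt (Cnat n) (S n) (Cadd v te) P 1 0 1),
    (coords_tt (Cnat n) n v Pp 0 1 0), (coords_tf (Cnat n) n (Cadd v te) P 1 0 0) by shift.
  apply exchange_full; nondeg.
Qed.

Lemma W1_exchange_mixed (Hf : weierstrass f) (n : nat) :
  Cadd (Cmul (W n true (S n) false v Pm) (W (S n) false n true (Cadd v te) P))
       (Cmul (W n false n false v Pp) (W n true n true (Cadd v te) P)) =
  Cadd (Cmul (W n true n true v Pm) (W n false n false (Cadd v te) P))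
       (Cmul (W n false (pred n) true v Pp) (W (pred n) true n false (Cadd v te) P)).
Proof.
  rewrite (coords_tf (Cnat n) n v Pm 0 (-1) 0), (coords_ft (Cnat n) n (Cadd v te) P 1 0 1),
    (coords_ff (Cnat n) n v Pp 0 1 0), (coords_tt (Cnat n) n (Cadd v te) P 1 0 0),
    (coords_tt (Cnat n) n v Pm 0 (-1) 0), (coords_ff (Cnat n) n (Cadd v te) P 1 0 0) by shift.
  rewrite exchange_mixed by (assumption || nondeg).
  destruct n as [|m]; cbn [Nat.pred]; f_equal.
  - assert (Hf0 : f C0 = C0).
    { apply (weierstrass_f0 _ eta Hf). nondeg. }
    unfold w_ft. norm_pt. replace (pt v P (Cmul eta Lam) eta (Cnat 0) 0 0 0 0 4) with C0 by Ceq_Z.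
    replace (W 0 false 0 true v Pp) with C0 by reflexivity.
    rewrite Hf0. unfold Cdiv. ring.
  - rewrite (coords_ft (Cnat (S m)) m v Pp 0 1 0),
      (coords_tf (Cnat (S m)) m (Cadd v te) P 1 0 (-1)) by shift.
    reflexivity.
Qed.

End LocalExchange.

(** * Exchanging adjacent lower labels *)

Section Swap.
Variables (fc : fchoice) (tau eta lam Lam : CC) (i2 : nat).
Local Notation f := (ff fc tau).
Local Notation te := (Cmul (CR 2) eta).
Local Notation W n a n' b v P := (W1 fc tau eta n a n' b v P Lam).
Local Notation colsum := (colsum fc tau eta lam Lam i2).
Local Notation dyn := (dyn_param eta lam).

Definition spectral_nondeg (v : CC) (N : nat) : Prop :=
  forall j, (j < N)%nat -> f (Csub (Cmul eta Lam) (Cadd v (Cmul te (Cnat j)))) <> C0.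
Definition dynamical_nondeg (N : nat) : Prop :=
  forall z : Z, (Z.abs z <= Z.of_nat N)%Z -> f (Cadd lam (Cmul te (CZ z))) <> C0.

Lemma colsum_overfull (K : list bool) : forall n c v, (length K < c)%nat -> colsum n c K v = C0.
Proof.
  induction K as [|b K IH]; intros n c v Hc; cbn [colsum length] in *.
  - destruct c; [lia | reflexivity].
  - destruct c as [|c]; [lia|].
    destruct (height_step false b n), (height_step true b n); rewrite ?IH by lia; ring.
Qed.

Lemma dyn_nondeg (N c n : nat) : dynamical_nondeg N -> (c <= n <= N)%nat -> f (dyn c n) <> C0.
Proof.
  intros HP Hc E. apply (HP (2 * Z.of_nat c - Z.of_nat n)%Z); [lia|].
  rewrite <- E. f_equal. unfold dyn_param. rewrite !INR_IZR_INZ. Ceq_Z.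
Qed.

Lemma spectral_nondeg_shift (v : CC) (N : nat) :
  spectral_nondeg v (S N) -> spectral_nondeg (Cadd v te) N.
Proof.
  intros HV j Hj E. apply (HV (S j)); [lia|]. rewrite <- E. f_equal. Ceq_Z.
Qed.

Variables (K : list bool) (v : CC).
Hypotheses (Hf : weierstrass f) (H2e : f te <> C0) (HV : spectral_nondeg v 2)
  (HP : dynamical_nondeg (S (S (length K)))).

Lemma mul_colsum_eq (X Y : CC) (n c : nat) (w : CC) :
  ((c <= length K)%nat -> X = Y) -> Cmul X (colsum n c K w) = Cmul Y (colsum n c K w).
Proof.
  intro H. destruct (le_lt_dec c (length K)) as [Hc|Hc].
  - rewrite H by exact Hc. reflexivity.
  - rewrite colsum_overfull by exact Hc. ring.
Qed.

Ltac exchange_hyps := first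
  [ assumption
  | unfold dyn_param; Ceq_Z
  | apply (dyn_nondeg (S (S (length K)))); [exact HP | lia]
  | let E := fresh in intro E; apply (HV 0%nat); [lia | rewrite <- E; f_equal; Ceq_Z]
  | let E := fresh in intro E; apply (HV 1%nat); [lia | rewrite <- E; f_equal; Ceq_Z] ].

Local Notation vv := (Cadd (Cadd v te) te).

Lemma colsum_exchange_empty (m c2 : nat) : let k := length K in
  Cmul (Cmul (W (S m) false (S m) false v (dyn c2 (S k))) (W (S m) false m true (Cadd v te) (dyn c2 k)))
       (colsum m c2 K vv) =
  Cmul (Cmul (W (S m) false m true v (dyn c2 (S k))) (W m false m false (Cadd v te) (dyn c2 k)))
       (colsum m c2 K vv).
Proof.
  intro k. apply mul_colsum_eq. intro Hc.
  apply W1_exchange_empty; exchange_hyps.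
Qed.

Lemma colsum_exchange_mixed (n c2 : nat) : let k := length K in
  Cmul (Cadd (Cmul (W n true (S n) false v (dyn c2 (S k))) (W (S n) false n true (Cadd v te) (dyn c2 k)))
             (Cmul (W n false n false v (dyn (S c2) (S k))) (W n true n true (Cadd v te) (dyn c2 k))))
       (colsum n c2 K vv) =
  Cmul (Cadd (Cmul (W n true n true v (dyn c2 (S k))) (W n false n false (Cadd v te) (dyn c2 k)))
             (Cmul (W n false (pred n) true v (dyn (S c2) (S k)))
                   (W (pred n) true n false (Cadd v te) (dyn c2 k))))
       (colsum n c2 K vv).
Proof.
  intro k. apply mul_colsum_eq. intro Hc.
  apply W1_exchange_mixed; exchange_hyps.
Qed.

Lemma colsum_exchange_full (n c2 : nat) : let k := length K in
  Cmul (Cmul (W n true (S n) false v (dyn (S c2) (S k))) (W (S n) true (S n) true (Cadd v te) (dyn c2 k)))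
       (colsum (S n) c2 K vv) =
  Cmul (Cmul (W n true n true v (dyn (S c2) (S k))) (W n true (S n) false (Cadd v te) (dyn c2 k)))
       (colsum (S n) c2 K vv).
Proof.
  intro k. apply mul_colsum_eq. intro Hc.
  apply W1_exchange_full; exchange_hyps.
Qed.

Lemma colsum_swap (n c : nat) :
  colsum n c (false :: true :: K) v = colsum n c (true :: false :: K) v.
Proof.
  pose proof colsum_exchange_empty as E0. pose proof colsum_exchange_full as E2.
  assert (E1 : forall n c2, _) by exact colsum_exchange_mixed.
  cbv zeta in E0, E1, E2.
  assert (W00 : forall P, W 0 false 0 true v P = C0) by reflexivity.
  cbn [colsum height_step length].
  (* Grouped by the number of ones left for [K], the terms match the three exchange relations. *)
  destruct c as [|[|d]]; destruct n as [|m]; cbn [height_step].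
  - ring.
  - refine (eq_of_sub_sum3 _ _ _ _ _ _ _ _ _ (E0 m 0%nat) (eq_refl C0) (eq_refl C0)). ring.
  - specialize (E1 0%nat 0%nat). cbn [Nat.pred] in E1. rewrite W00 in E1.
    refine (eq_of_sub_sum3 _ _ _ _ _ _ _ _ _ E1 (eq_refl C0) (eq_refl C0)). ring.
  - specialize (E1 (S m) 0%nat). cbn [Nat.pred] in E1.
    refine (eq_of_sub_sum3 _ _ _ _ _ _ _ _ _ (E0 m 1%nat) E1 (eq_refl C0)). ring.
  - specialize (E1 0%nat (S d)). cbn [Nat.pred] in E1. rewrite W00 in E1.
    refine (eq_of_sub_sum3 _ _ _ _ _ _ _ _ _ E1 (E2 0%nat d) (eq_refl C0)). ring.
  - specialize (E1 (S m) (S d)). cbn [Nat.pred] in E1.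
    refine (eq_of_sub_sum3 _ _ _ _ _ _ _ _ _ (E0 m (S (S d))) E1 (E2 (S m) d)). ring.
Qed.

End Swap.

Section Sorting.
Variables (fc : fchoice) (tau eta lam Lam : CC) (i2 : nat).
Local Notation f := (ff fc tau).
Local Notation te := (Cmul (CR 2) eta).
Local Notation colsum := (colsum fc tau eta lam Lam i2).
Local Notation spectral_nondeg := (spectral_nondeg fc tau eta Lam).
Local Notation dynamical_nondeg := (dynamical_nondeg fc tau eta lam).
Hypotheses (Hf : weierstrass f) (H2e : f te <> C0).

Definition colsum_equiv (v : CC) (K1 K2 : list bool) : Prop :=
  forall n c, colsum n c K1 v = colsum n c K2 v.

Lemma colsum_equiv_cons (b : bool) (K1 K2 : list bool) (v : CC) :
  length K1 = length K2 -> colsum_equiv (Cadd v te) K1 K2 -> colsum_equiv v (b :: K1) (b :: K2).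
Proof.
  intros Hlen H n c. cbn [colsum length]. rewrite Hlen.
  destruct (height_step false b n), (height_step true b n), c; rewrite ?H; reflexivity.
Qed.

Lemma dynamical_nondeg_mono (N M : nat) : (N <= M)%nat -> dynamical_nondeg M -> dynamical_nondeg N.
Proof. intros HNM H z Hz. apply H. lia. Qed.

Lemma spectral_nondeg_mono (v : CC) (N M : nat) :
  (N <= M)%nat -> spectral_nondeg v M -> spectral_nondeg v N.
Proof. intros HNM H j Hj. apply H. lia. Qed.

Lemma colsum_move_true (y x : nat) : forall v,
  spectral_nondeg v (S (x + y)) -> dynamical_nondeg (S (x + y)) ->
  colsum_equiv v (true :: repeat false x ++ repeat true y) (repeat false x ++ true :: repeat true y).
Proof.
  induction x as [|x IH]; intros v HV HP n c; [reflexivity|].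
  cbn [repeat app]. rewrite <- (colsum_swap _ _ _ _ _ _ _ _ Hf H2e).
  - apply colsum_equiv_cons.
    + cbn [length]. rewrite !length_app. cbn [length]. rewrite !repeat_length. lia.
    + apply IH; [apply spectral_nondeg_shift | apply (dynamical_nondeg_mono _ (S (S x + y)))];
        (assumption || lia).
  - apply (spectral_nondeg_mono _ _ (S (S x + y))); [lia | exact HV].
  - rewrite length_app, !repeat_length. exact HP.
Qed.

Definition sort_bools (K : list bool) : list bool :=
  repeat false (length K - ones K) ++ repeat true (ones K).

Lemma colsum_sort (K : list bool) : forall v,
  spectral_nondeg v (length K) -> dynamical_nondeg (length K) -> colsum_equiv v K (sort_bools K).
Proof.
  induction K as [|b K IH]; intros v HV HP; [intros n c; reflexivity|].
  pose proof (ones_le_length K) as Hle.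
  intros n c. transitivity (colsum n c (b :: sort_bools K) v).
  - apply colsum_equiv_cons.
    + unfold sort_bools. rewrite length_app, !repeat_length. lia.
    + apply IH; [apply spectral_nondeg_shift; exact HV|].
      apply (dynamical_nondeg_mono _ (length (b :: K))); [cbn; lia | exact HP].
  - unfold sort_bools. cbn [length]. destruct b.
    + change (ones (true :: K)) with (S (ones K)).
      replace (S (length K) - S (ones K))%nat with (length K - ones K)%nat by lia.
      apply colsum_move_true; cbn [length] in HV, HP;
        replace (S (length K - ones K + ones K)) with (S (length K)) by lia; assumption.
    + change (ones (false :: K)) with (ones K).
      replace (S (length K) - ones K)%nat with (S (length K - ones K)) by lia. reflexivity.
Qed.

End Sorting.

Theorem colsum_eq_same_ones fc tau eta lam Lam i2 (K K' : list bool) (v : CC) :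
  weierstrass (ff fc tau) -> ff fc tau (Cmul (CR 2) eta) <> C0 ->
  length K = length K' -> ones K = ones K' ->
  spectral_nondeg fc tau eta Lam v (length K) -> dynamical_nondeg fc tau eta lam (length K) ->
  forall n c, colsum fc tau eta lam Lam i2 n c K v = colsum fc tau eta lam Lam i2 n c K' v.
Proof.
  intros Hf H2e Hlen Hones HV HP n c.
  rewrite (colsum_sort _ _ _ _ _ _ Hf H2e K v HV HP).
  rewrite Hlen in HV, HP. rewrite (colsum_sort _ _ _ _ _ _ Hf H2e K' v HV HP).
  unfold sort_bools. rewrite Hlen, Hones. reflexivity.
Qed.

Theorem lemma3p5 (fc : fchoice) (eta tau : CC) (Htau : 0 < im tau)
  (J : nat) (HJ : (0 < J)%nat) (i1 j1 i2 j2 : nat) (K K' : list bool)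
  (HK : length K = J) (HK' : length K' = J)
  (HjK : ones K = j2) (HjK' : ones K' = j2)
  (v lam Lam : CC)
  (H2eta : ff fc tau (Cmul (CR 2) eta) <> C0)
  (Hden1 : forall k : nat, (k < J)%nat ->
     ff fc tau (Csub (Cmul eta Lam) (Cadd v (Cmul (Cmul (CR 2) eta) (Cnat k)))) <> C0)
  (Hden2 : forall m : Z, (Z.abs m <= Z.of_nat J)%Z ->
     ff fc tau (Cadd lam (Cmul (Cmul (CR 2) eta) (CZ m))) <> C0) :
  WJsum fc tau eta i1 j1 i2 K v lam Lam = WJsum fc tau eta i1 j1 i2 K' v lam Lam.
Proof.
  assert (Hf : weierstrass (ff fc tau))
    by (destruct fc; [exact (theta_weierstrass tau Htau) | apply sin_weierstrass]).
  rewrite !WJsum_colsum. apply colsum_eq_same_ones; try congruence; rewrite HK; assumption.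
Qed.
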